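(* Let $n\ge 2$ be an integer, $k,c_b>0$, $\rho_0>0$, and let $\lambda_{1,0}\le\cdots\le\lambda_{n,0}$ be real numbers. Consider the system $$\lambda_i'=-\lambda_i^2+\frac{k}{n}(\rho-c_b)\ (i=1,\dots,n),\qquad \rho'=-\rho\lambda,\quad \lambda=\sum_{i=1}^n\lambda_i,\qquad \rho(0)=\rho_0,\ \lambda_i(0)=\lambda_{i,0},$$ and suppose its maximal interval of existence is $[0,t_B)$ with $0<t_B<\infty$. Then $\lim_{t\to t_B^-}\int_0^t\rho(s)\,ds=\infty$.
   Context: Solutions are real-valued and continuously differentiable on $[0,t_B)$. *)

From Stdlib Require Import Reals.
From Coquelicot Require Import Coquelicot.
Open Scope R_scope.

Fixpoint sumR (f : nat -> R) (n : nat) : R :=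
  match n with
  | O => 0
  | S m => sumR f m + f m
  end.

(* (lam_0,...,lam_{n-1}, rho) is a solution of
     lam_i' = - lam_i^2 + (k/n)(rho - cb),  rho' = - rho * sum_i lam_i,
     rho(0) = rho0, lam_i(0) = lam0 i
   on the interval [0,T): continuous (from the right) at 0, and
   differentiable satisfying the ODE on (0,T).  (Together with the ODE this
   is the same as a C^1 solution on [0,T) with one-sided derivative at 0.) *)
Definition is_sol (n : nat) (k cb rho0 : R) (lam0 : nat -> R) (T : R)
    (lam : nat -> R -> R) (rho : R -> R) : Prop :=
  rho 0 = rho0 /\
  (forall i, (i < n)%nat -> lam i 0 = lam0 i) /\
  filterlim rho (at_right 0) (locally (rho 0)) /\
  (forall i, (i < n)%nat -> filterlim (lam i) (at_right 0) (locally (lam i 0))) /\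
  (forall t, 0 < t < T ->
     (forall i, (i < n)%nat ->
        is_derive (lam i) t (- (lam i t) ^ 2 + k / INR n * (rho t - cb))) /\
     is_derive rho t (- rho t * sumR (fun i => lam i t) n)).

Definition maximal_sol (n : nat) (k cb rho0 : R) (lam0 : nat -> R) (tB : R)
    (lam : nat -> R -> R) (rho : R -> R) : Prop :=
  is_sol n k cb rho0 lam0 tB lam rho /\
  forall T (lam' : nat -> R -> R) (rho' : R -> R),
    tB < T -> is_sol n k cb rho0 lam0 T lam' rho' ->
    ~ (forall t, 0 <= t < tB ->
         rho' t = rho t /\ forall i, (i < n)%nat -> lam' i t = lam i t).

From Stdlib Require Import Reals Lra Lia Classical.
From Coquelicot Require Import Coquelicot.
Open Scope R_scope.

(* Suppose [∫_0^t ρ] stays below [M] as [t -> tB].  Since [λ_i - (k/n) ∫_0^t ρ] is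
   nonincreasing, every [λ_i] is bounded above.  If some [λ_i] were unbounded below it would
   tend to [-∞]; then [(1/λ_i)' <= 2] gives [-λ_i(t) >= 1/(2(tB - t))], and
   [ln ρ - ln (-λ_i) + K t] is nondecreasing for a suitable [K], so [ρ(t) >= c/(tB - t)],
   whose integral diverges.  Hence all [λ_i] are bounded near [tB], and so is [ρ] because
   [(ln ρ)' = - Σ λ_i].  But a solution of this locally Lipschitz system that stays bounded
   up to [tB] can be continued past [tB]: Picard iteration from a time close enough to [tB]
   gives a solution on a uniform interval, which agrees with the given one by uniqueness. *)

(** * Real analysis on intervals *)

Lemma continuous_of_lipschitz_at (f : R -> R) (x K : R) :
  (forall y, Rabs (f y - f x) <= K * Rabs (y - x)) -> continuous f x.
Proof.
  intros Hf. apply filterlim_locally. intros [e He]. simpl.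
  pose proof (Rabs_pos K). pose proof (RRle_abs K).
  assert (Hd : 0 < e / (Rabs K + 1)) by (apply Rdiv_lt_0_compat; lra).
  exists (mkposreal _ Hd). intros y Hy. change (Rabs (y - x) < e / (Rabs K + 1)) in Hy.
  change (Rabs (f y - f x) < e).
  assert (He' : e = (Rabs K + 1) * (e / (Rabs K + 1))) by (field; lra).
  pose proof (Rabs_pos (y - x)). specialize (Hf y). nra.
Qed.

Lemma is_derive_continuous (f : R -> R) (x l : R) : is_derive f x l -> continuous f x.
Proof.
  intros H. apply (ex_derive_continuous (K := R_AbsRing) (V := R_NormedModule)). exists l. exact H.
Qed.

Lemma continuous_Rplus (f g : R -> R) (x : R) :
  continuous f x -> continuous g x -> continuous (fun y => f y + g y) x.
Proof. apply (continuous_plus (K := R_AbsRing) (V := R_NormedModule)). Qed.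

Lemma continuous_Rmult (f g : R -> R) (x : R) :
  continuous f x -> continuous g x -> continuous (fun y => f y * g y) x.
Proof. apply (continuous_mult (K := R_AbsRing)). Qed.

Lemma is_derive_Rplus (f g : R -> R) (x df dg : R) :
  is_derive f x df -> is_derive g x dg -> is_derive (fun y => f y + g y) x (df + dg).
Proof. apply (is_derive_plus (K := R_AbsRing) (V := R_NormedModule)). Qed.

Lemma is_derive_Rminus (f g : R -> R) (x df dg : R) :
  is_derive f x df -> is_derive g x dg -> is_derive (fun y => f y - g y) x (df - dg).
Proof. apply (is_derive_minus (K := R_AbsRing) (V := R_NormedModule)). Qed.

Lemma is_derive_Ropp (f : R -> R) (x df : R) :
  is_derive f x df -> is_derive (fun y => - f y) x (- df).
Proof. apply (is_derive_opp (K := R_AbsRing) (V := R_NormedModule)). Qed.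

Lemma is_derive_Rscal_id (c x : R) : is_derive (fun y => c * y) x c.
Proof.
  pose proof (is_derive_scal (fun y => y) x c 1 (is_derive_id (K := R_AbsRing) x)) as H.
  rewrite Rmult_1_r in H. exact H.
Qed.

Lemma is_derive_ln_comp (f : R -> R) (x df : R) :
  is_derive f x df -> 0 < f x -> is_derive (fun y => ln (f y)) x (df / f x).
Proof.
  intros Hf Hpos. apply (is_derive_comp ln f x (/ f x) df); [apply is_derive_ln|]; assumption.
Qed.

Lemma exp_le_exp_of_le (x y : R) : x <= y -> exp x <= exp y.
Proof.
  intros [Hlt | ->]; [left; apply exp_increasing; exact Hlt | right; reflexivity].
Qed.

Lemma MVT_open_interval (f df : R -> R) (p q a b : R) :
  (forall x, p < x < q -> is_derive f x (df x)) -> p < a -> a <= b -> b < q ->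
  exists c, a <= c <= b /\ f b - f a = df c * (b - a).
Proof.
  intros Hd Hpa Hab Hbq.
  destruct (MVT_gen f a b df) as [c [Hc E]].
  - intros x Hx. rewrite Rmin_left, Rmax_right in Hx by lra. apply Hd. lra.
  - intros x Hx. rewrite Rmin_left, Rmax_right in Hx by lra.
    apply continuity_pt_filterlim, (is_derive_continuous f x (df x)), Hd. lra.
  - rewrite Rmin_left, Rmax_right in Hc by lra. exists c. split; assumption.
Qed.

Lemma nondecreasing_of_derive_nonneg (f df : R -> R) (p q a b : R) :
  (forall x, p < x < q -> is_derive f x (df x)) -> (forall x, p < x < q -> 0 <= df x) ->
  p < a -> a <= b -> b < q -> f a <= f b.
Proof.
  intros Hd Hpos Hpa Hab Hbq.
  destruct (MVT_open_interval f df p q a b Hd Hpa Hab Hbq) as [c [Hc E]].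
  assert (0 <= df c) by (apply Hpos; lra). nra.
Qed.

Lemma nonincreasing_of_derive_nonpos (f df : R -> R) (p q a b : R) :
  (forall x, p < x < q -> is_derive f x (df x)) -> (forall x, p < x < q -> df x <= 0) ->
  p < a -> a <= b -> b < q -> f b <= f a.
Proof.
  intros Hd Hneg Hpa Hab Hbq.
  destruct (MVT_open_interval f df p q a b Hd Hpa Hab Hbq) as [c [Hc E]].
  assert (df c <= 0) by (apply Hneg; lra). nra.
Qed.

Lemma filterlim_at_left_p_infty_of_nondecreasing (f : R -> R) (a b : R) :
  (forall x y, a < x <= y -> y < b -> f x <= f y) ->
  (forall M, exists t, a < t < b /\ M < f t) ->
  filterlim f (at_left b) (Rbar_locally p_infty).
Proof.
  intros Hmono Hunb P [M HP]. destruct (Hunb M) as [t [Ht HMt]].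
  assert (Hd : 0 < b - t) by lra. exists (mkposreal _ Hd).
  intros y Hy Hyb. change (Rabs (y - b) < b - t) in Hy. apply Rabs_lt_between in Hy.
  apply HP. eapply Rlt_le_trans; [exact HMt | apply Hmono; lra].
Qed.

Lemma unbounded_of_derive_ge_inv_dist (f df : R -> R) (s b c : R) :
  s < b -> 0 < c ->
  (forall x, s < x < b -> is_derive f x (df x)) -> (forall x, s < x < b -> c / (b - x) <= df x) ->
  forall M, exists t, s < t < b /\ M < f t.
Proof.
  intros Hsb Hc Hd Hdf M.
  (* [f + c ln (b - x)] is nondecreasing while [c ln (b - x)] tends to [-∞]. *)
  set (G := fun x => f x + c * ln (b - x)).
  assert (HG : forall x, s < x < b -> is_derive G x (df x + c * (- 1 / (b - x)))).
  { intros x Hx. apply is_derive_Rplus; [apply Hd; exact Hx|].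
    auto_derive; [lra | field; lra]. }
  set (s' := (s + b) / 2).
  set (d := Rmin ((b - s') / 2) (exp ((G s' - M - 1) / c))).
  assert (Hd0 : 0 < d) by (apply Rmin_glb_lt; [unfold s'; lra | apply exp_pos]).
  assert (Hd1 : d <= (b - s') / 2) by apply Rmin_l.
  assert (Hlnd : c * ln d <= G s' - M - 1).
  { replace (G s' - M - 1) with (c * ((G s' - M - 1) / c)) by (field; lra).
    apply Rmult_le_compat_l; [lra|].
    rewrite <- (ln_exp ((G s' - M - 1) / c)). apply ln_le; [exact Hd0 | apply Rmin_r]. }
  exists (b - d). split; [unfold s' in *; lra|].
  assert (HGs : G s' <= G (b - d)).
  { apply (nondecreasing_of_derive_nonneg G _ s b s' (b - d) HG); try (unfold s' in *; lra).
    intros x Hx. specialize (Hdf x Hx).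
    replace (c * (-1 / (b - x))) with (- (c / (b - x))) by (field; lra). lra. }
  unfold G in HGs, Hlnd. replace (b - (b - d)) with d in HGs by ring. lra.
Qed.

Lemma ex_RInt_of_continuous (g : R -> R) (u v : R) : (forall x, continuous g x) -> ex_RInt g u v.
Proof. intros H. apply (ex_RInt_continuous (V := R_CompleteNormedModule)). intros x _. apply H. Qed.

Lemma is_derive_RInt_interior (g : R -> R) (p q a t : R) :
  (forall x, p < x < q -> continuous g x) -> p < a < q -> p < t < q ->
  is_derive (fun x => RInt g a x) t (g t).
Proof.
  intros Hc Ha Ht. apply (is_derive_RInt g _ a t); [|apply Hc; exact Ht].
  apply (locally_interval _ t p q); simpl; try lra. intros y Hpy Hyq.
  apply (RInt_correct (V := R_CompleteNormedModule)), (ex_RInt_continuous (V := R_CompleteNormedModule)).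
  intros z Hz. apply Hc. split.
  - apply Rlt_le_trans with (Rmin a y); [apply Rmin_glb_lt; lra | apply Hz].
  - apply Rle_lt_trans with (Rmax a y); [apply Hz | apply Rmax_lub_lt; lra].
Qed.

Lemma is_derive_RInt_0 (f : R -> R) (T t : R) :
  filterlim f (at_right 0) (locally (f 0)) -> (forall x, 0 < x < T -> continuous f x) ->
  0 < t < T -> is_derive (fun x => RInt f 0 x) t (f t).
Proof.
  intros H0 Hc Ht.
  (* Extending [f] by the constant [f 0] to the left makes it continuous around [[0, t]]. *)
  set (g := fun x => if Rle_dec x 0 then f 0 else f x).
  assert (Hg : forall x, -1 < x < T -> continuous g x).
  { intros x Hx. destruct (Rtotal_order x 0) as [Hneg | [-> | Hpos]].
    - apply (continuous_ext_loc g (fun _ => f 0)); [|apply continuous_const].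
      apply (locally_interval _ x m_infty 0); simpl; try lra.
      intros y _ Hy. unfold g. destruct Rle_dec; [reflexivity | lra].
    - apply filterlim_locally. intros eps.
      destruct (proj1 (filterlim_locally f (f 0)) H0 eps) as [d Hd].
      exists d. intros y Hy. unfold g. destruct (Rle_dec 0 0) as [_ | ]; [|lra].
      destruct (Rle_dec y 0); [apply ball_center | apply Hd; [exact Hy | lra]].
    - apply (continuous_ext_loc g f); [|apply Hc; lra].
      apply (locally_interval _ x 0 T); simpl; try lra.
      intros y Hy _. unfold g. destruct Rle_dec; [lra | reflexivity]. }
  apply (is_derive_ext_loc (fun x => RInt g 0 x)).
  - apply (locally_interval _ t 0 p_infty); simpl; try lra. intros y Hy _.
    apply RInt_ext. intros z Hz. rewrite Rmin_left, Rmax_right in Hz by lra.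
    unfold g. destruct Rle_dec; [lra | reflexivity].
  - replace (f t) with (g t) by (unfold g; destruct Rle_dec; [lra | reflexivity]).
    apply (is_derive_RInt_interior g (-1) T); [exact Hg | lra | lra].
Qed.

Lemma abs_RInt_le (g : R -> R) (u v K : R) :
  ex_RInt g u v -> (forall x, Rmin u v <= x <= Rmax u v -> Rabs (g x) <= K) ->
  Rabs (RInt g u v) <= K * Rabs (v - u).
Proof.
  intros Hex Hb. destruct (Rle_dec u v).
  - rewrite Rmin_left, Rmax_right in Hb by lra. rewrite (Rabs_right (v - u)) by lra.
    rewrite Rmult_comm. apply abs_RInt_le_const; assumption.
  - rewrite Rmin_right, Rmax_left in Hb by lra.
    rewrite <- (opp_RInt_swap g v u) by (apply ex_RInt_swap; exact Hex).
    rewrite (Rabs_left (v - u)) by lra. unfold opp; simpl. rewrite Rabs_Ropp.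
    replace (- (v - u)) with (u - v) by ring. rewrite Rmult_comm.
    apply abs_RInt_le_const; [lra | apply ex_RInt_swap; exact Hex | exact Hb].
Qed.

Lemma abs_RInt_sub_le (f g : R -> R) (u v K : R) :
  ex_RInt f u v -> ex_RInt g u v ->
  (forall x, Rmin u v <= x <= Rmax u v -> Rabs (f x - g x) <= K) ->
  Rabs (RInt f u v - RInt g u v) <= K * Rabs (v - u).
Proof.
  intros Hf Hg Hb.
  replace (RInt f u v - RInt g u v) with (RInt (fun x => f x - g x) u v)
    by (apply (RInt_minus (V := R_CompleteNormedModule)); assumption).
  apply abs_RInt_le; [apply (ex_RInt_minus (V := R_CompleteNormedModule)) |]; assumption.
Qed.

Lemma eq_add_RInt_of_derive (f df : R -> R) (p q a b : R) :
  (forall x, p < x < q -> is_derive f x (df x)) -> (forall x, p < x < q -> continuous df x) ->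
  p < a -> a <= b -> b < q -> f b = f a + RInt df a b.
Proof.
  intros Hd Hc Hpa Hab Hbq.
  rewrite (is_RInt_unique df a b (minus (f b) (f a))); [unfold minus, plus, opp; simpl; ring|].
  apply (is_RInt_derive (V := R_CompleteNormedModule));
    intros x Hx; rewrite Rmin_left, Rmax_right in Hx by lra; [apply Hd | apply Hc]; lra.
Qed.

Lemma is_derive_glue (f g df dg : R -> R) (p t1 tB T t : R) :
  t1 < tB -> (forall x, p < x < tB -> is_derive f x (df x)) ->
  (forall x, t1 < x < T -> is_derive g x (dg x)) -> (forall x, t1 < x < tB -> f x = g x) ->
  p < t < T ->
  is_derive (fun x => if Rlt_dec x tB then f x else g x) t (if Rlt_dec t tB then df t else dg t).
Proof.
  intros Ht1 Hf Hg Hfg Ht. destruct (Rlt_dec t tB) as [Hlt | Hge].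
  - apply (is_derive_ext_loc f); [|apply Hf; lra].
    apply (locally_interval _ t p tB); simpl; try lra.
    intros y _ Hy. destruct Rlt_dec; [reflexivity | lra].
  - apply (is_derive_ext_loc g); [|apply Hg; lra].
    apply (locally_interval _ t t1 T); simpl; try lra.
    intros y Hy1 Hy2. destruct Rlt_dec; [symmetry; apply Hfg; lra | reflexivity].
Qed.

Lemma sumR_ext (f g : nat -> R) (N : nat) :
  (forall i, (i < N)%nat -> f i = g i) -> sumR f N = sumR g N.
Proof.
  induction N as [|N IH]; intros H; simpl; [reflexivity|].
  rewrite IH by (intros; apply H; lia). rewrite H by lia. reflexivity.
Qed.

Lemma sumR_le (f g : nat -> R) (N : nat) :
  (forall i, (i < N)%nat -> f i <= g i) -> sumR f N <= sumR g N.
Proof.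
  induction N as [|N IH]; intros H; simpl; [lra|].
  apply Rplus_le_compat; [apply IH; intros; apply H | apply H]; lia.
Qed.

Lemma sumR_const (c : R) (N : nat) : sumR (fun _ => c) N = INR N * c.
Proof. induction N as [|N IH]; simpl sumR; [simpl; ring | rewrite IH, S_INR; ring]. Qed.

Lemma sumR_nonneg (f : nat -> R) (N : nat) : (forall i, (i < N)%nat -> 0 <= f i) -> 0 <= sumR f N.
Proof. intros H. rewrite <- (Rmult_0_r (INR N)), <- sumR_const. apply sumR_le, H. Qed.

Lemma sumR_Rminus (f g : nat -> R) (N : nat) :
  sumR (fun i => f i - g i) N = sumR f N - sumR g N.
Proof. induction N as [|N IH]; simpl; [ring | rewrite IH; ring]. Qed.

Lemma Rabs_sumR_le (f : nat -> R) (N : nat) : Rabs (sumR f N) <= sumR (fun i => Rabs (f i)) N.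
Proof.
  induction N as [|N IH]; simpl; [rewrite Rabs_R0; lra|].
  eapply Rle_trans; [apply Rabs_triang | lra].
Qed.

Lemma Rabs_sumR_le_const (f : nat -> R) (N : nat) (B : R) :
  (forall i, (i < N)%nat -> Rabs (f i) <= B) -> Rabs (sumR f N) <= INR N * B.
Proof.
  intros H. eapply Rle_trans; [apply Rabs_sumR_le|].
  rewrite <- sumR_const. apply sumR_le, H.
Qed.

Lemma le_sumR (f : nat -> R) (N j : nat) :
  (forall i, (i < N)%nat -> 0 <= f i) -> (j < N)%nat -> f j <= sumR f N.
Proof.
  induction N as [|N IH]; intros H Hj; [lia|]. simpl.
  destruct (Nat.eq_dec j N) as [-> | Hne].
  - assert (0 <= sumR f N) by (apply sumR_nonneg; intros; apply H; lia). lra.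
  - assert (f j <= sumR f N) by (apply IH; [intros; apply H | ]; lia).
    assert (0 <= f N) by (apply H; lia). lra.
Qed.

Lemma sumR_sub_le (f : nat -> R) (N i : nat) (A : R) :
  (forall j, (j < N)%nat -> f j <= A) -> 0 <= A -> (i < N)%nat -> sumR f N - f i <= INR N * A.
Proof.
  induction N as [|N IH]; intros H HA Hi; [lia|]. simpl sumR. rewrite S_INR.
  destruct (Nat.eq_dec i N) as [-> | Hne].
  - assert (sumR f N <= INR N * A) by (rewrite <- sumR_const; apply sumR_le; intros; apply H; lia). lra.
  - assert (sumR f N - f i <= INR N * A) by (apply IH; [intros; apply H | | ]; lia || lra).
    assert (f N <= A) by (apply H; lia). lra.
Qed.

Lemma continuous_sumR (Y : R -> nat -> R) (N : nat) (x : R) :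
  (forall i, (i < N)%nat -> continuous (fun u => Y u i) x) ->
  continuous (fun u => sumR (Y u) N) x.
Proof.
  induction N as [|N IH]; intros H; simpl; [apply continuous_const|].
  apply (continuous_Rplus (fun u => sumR (Y u) N)); [apply IH; intros |]; apply H; lia.
Qed.

Lemma exists_div_pow2_lt (K eps : R) : 0 < eps -> exists m, K / 2 ^ m < eps.
Proof.
  intros He. pose proof (Rabs_pos K). pose proof (RRle_abs K).
  destruct (pow_lt_1_zero (/ 2)) with (y := eps / (Rabs K + 1)) as [m Hm].
  { rewrite Rabs_pos_eq; lra. }
  { apply Rdiv_lt_0_compat; lra. }
  exists m. specialize (Hm m (le_n m)).
  assert (Hp : 0 < (/ 2) ^ m) by (apply pow_lt; lra).
  rewrite Rabs_pos_eq, pow_inv in Hm by lra. rewrite pow_inv in Hp.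
  unfold Rdiv in *. apply (Rmult_lt_compat_l (Rabs K + 1)) in Hm; [|lra].
  replace ((Rabs K + 1) * (eps * / (Rabs K + 1))) with eps in Hm by (field; lra). nra.
Qed.

Lemma le_of_forall_le_add_div_pow2 (z r K : R) : (forall m, z <= r + K / 2 ^ m) -> z <= r.
Proof.
  intros H. apply Rle_plus_epsilon. intros eps He.
  destruct (exists_div_pow2_lt K eps He) as [m Hm]. specialize (H m). lra.
Qed.

Lemma eq_0_of_forall_abs_le_div_pow2 (z K : R) : (forall m, Rabs z <= K / 2 ^ m) -> z = 0.
Proof.
  intros H. apply Rabs_eq_0, Rle_antisym; [|apply Rabs_pos].
  apply (le_of_forall_le_add_div_pow2 _ _ K). intros m. rewrite Rplus_0_l. apply H.
Qed.

Lemma Rabs_lim_seq_sub_le (u : nat -> R) (l K : R) (m : nat) :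
  is_lim_seq u l -> (forall p, Rabs (u (p + m)%nat - u m) <= K) -> Rabs (l - u m) <= K.
Proof.
  intros Hl Hb. apply is_lim_seq_incr_n with (N := m) in Hl.
  assert (Hle : Rbar_le l (u m + K)).
  { apply (is_lim_seq_le (fun p => u (p + m)%nat) (fun _ => u m + K) l (u m + K));
      [| exact Hl | apply is_lim_seq_const].
    intros p. specialize (Hb p). apply Rabs_le_between in Hb. lra. }
  assert (Hge : Rbar_le (u m - K) l).
  { apply (is_lim_seq_le (fun _ => u m - K) (fun p => u (p + m)%nat) (u m - K) l);
      [| apply is_lim_seq_const | exact Hl].
    intros p. specialize (Hb p). apply Rabs_le_between in Hb. lra. }
  simpl in Hle, Hge. apply Rabs_le. lra.
Qed.

(** * Local existence and uniqueness for Lipschitz systems *)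

Definition l1_dist (N : nat) (x y : nat -> R) : R := sumR (fun j => Rabs (x j - y j)) N.

Lemma l1_dist_nonneg (N : nat) (x y : nat -> R) : 0 <= l1_dist N x y.
Proof. apply sumR_nonneg. intros; apply Rabs_pos. Qed.

Lemma Rabs_sub_le_l1_dist (N : nat) (x y : nat -> R) (j : nat) :
  (j < N)%nat -> Rabs (x j - y j) <= l1_dist N x y.
Proof. intros Hj. apply (le_sumR (fun l => Rabs (x l - y l))); [intros; apply Rabs_pos | exact Hj]. Qed.

Definition in_box (N : nat) (a : nat -> R) (r : R) (x : nat -> R) : Prop :=
  forall j, (j < N)%nat -> Rabs (x j - a j) <= r.

Definition bounded_on_box (N : nat) (a : nat -> R) (r M : R) (F : (nat -> R) -> nat -> R) : Prop :=
  forall x, in_box N a r x -> forall j, (j < N)%nat -> Rabs (F x j) <= M.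

Definition lipschitz_on_box (N : nat) (a : nat -> R) (r L : R) (F : (nat -> R) -> nat -> R) : Prop :=
  forall x y, in_box N a r x -> in_box N a r y -> forall j, (j < N)%nat ->
    Rabs (F x j - F y j) <= L * l1_dist N x y.

Definition lipschitz_path_in_box (N : nat) (a : nat -> R) (r M : R) (X : R -> nat -> R) : Prop :=
  (forall t, in_box N a r (X t)) /\
  (forall t s j, (j < N)%nat -> Rabs (X t j - X s j) <= M * Rabs (t - s)).

Lemma lipschitz_path_continuous (N : nat) (a : nat -> R) (r M : R) (X : R -> nat -> R)
    (t : R) (j : nat) :
  lipschitz_path_in_box N a r M X -> (j < N)%nat -> continuous (fun s => X s j) t.
Proof.
  intros [_ HX] Hj. apply (continuous_of_lipschitz_at _ _ M). intros y. apply HX, Hj.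
Qed.

(* Freezing time outside [t0 - h, t0 + h] makes the Picard iterates paths defined on all of R. *)
Definition clamp (t0 h t : R) : R := Rmax (t0 - h) (Rmin (t0 + h) t).

Lemma clamp_dist (t0 h t : R) : 0 <= h -> Rabs (clamp t0 h t - t0) <= h.
Proof. intros Hh. unfold clamp, Rmax, Rmin. repeat destruct Rle_dec; apply Rabs_le; lra. Qed.

Lemma clamp_lipschitz (t0 h t s : R) : 0 <= h -> Rabs (clamp t0 h t - clamp t0 h s) <= Rabs (t - s).
Proof.
  intros Hh. pose proof (Rle_abs (t - s)). pose proof (Rle_abs (- (t - s))). rewrite Rabs_Ropp in *.
  unfold clamp, Rmax, Rmin. repeat destruct Rle_dec; apply Rabs_le; lra.
Qed.

Lemma clamp_id (t0 h t : R) : Rabs (t - t0) <= h -> clamp t0 h t = t.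
Proof.
  intros H. apply Rabs_le_between in H. unfold clamp.
  rewrite Rmin_right, Rmax_right by lra. reflexivity.
Qed.

Definition picard_step (F : (nat -> R) -> nat -> R) (a : nat -> R) (t0 h : R)
    (X : R -> nat -> R) : R -> nat -> R :=
  fun t j => a j + RInt (fun s => F (X s) j) t0 (clamp t0 h t).

Fixpoint picard_iter (F : (nat -> R) -> nat -> R) (a : nat -> R) (t0 h : R) (m : nat) :
    R -> nat -> R :=
  match m with
  | O => fun _ => a
  | S m => picard_step F a t0 h (picard_iter F a t0 h m)
  end.

Definition picard_limit (F : (nat -> R) -> nat -> R) (a : nat -> R) (t0 h t : R) (j : nat) : R :=
  real (Lim_seq (fun m => picard_iter F a t0 h m t j)).

Section Picard.

Variables (N : nat) (F : (nat -> R) -> nat -> R) (a : nat -> R) (r M L t0 h : R).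
Hypotheses (Hr : 0 <= r) (Hh : 0 < h) (HM : 0 <= M) (HL : 0 <= L)
  (HMh : M * h <= r) (HLh : INR N * L * h <= / 2)
  (HFb : bounded_on_box N a r M F) (HFl : lipschitz_on_box N a r L F).

Lemma continuous_field_along_path (X : R -> nat -> R) (s : R) (j : nat) :
  lipschitz_path_in_box N a r M X -> (j < N)%nat -> continuous (fun u => F (X u) j) s.
Proof.
  intros [Hbox Hlip] Hj. apply (continuous_of_lipschitz_at _ _ (L * (INR N * M))). intros y.
  eapply Rle_trans; [apply HFl; auto|]. rewrite Rmult_assoc. apply Rmult_le_compat_l; [exact HL|].
  eapply Rle_trans; [apply (sumR_le _ (fun _ => M * Rabs (y - s))); intros; apply Hlip; auto|].
  rewrite sumR_const. right; ring.
Qed.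

Lemma ex_RInt_field_along_path (X : R -> nat -> R) (u v : R) (j : nat) :
  lipschitz_path_in_box N a r M X -> (j < N)%nat -> ex_RInt (fun s => F (X s) j) u v.
Proof. intros HX Hj. apply ex_RInt_of_continuous. intros; apply continuous_field_along_path; auto. Qed.

Lemma picard_step_path (X : R -> nat -> R) :
  lipschitz_path_in_box N a r M X -> lipschitz_path_in_box N a r M (picard_step F a t0 h X).
Proof.
  intros HX. pose proof HX as [Hbox _]. unfold picard_step. split.
  - intros t j Hj. rewrite Rplus_minus_l.
    eapply Rle_trans; [apply abs_RInt_le with (K := M)|].
    + apply ex_RInt_field_along_path; auto.
    + intros; apply HFb; auto.
    + eapply Rle_trans; [|exact HMh]. apply Rmult_le_compat_l; [exact HM | apply clamp_dist; lra].
  - intros t s j Hj.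
    rewrite <- (RInt_Chasles (V := R_CompleteNormedModule) _ t0 (clamp t0 h s) (clamp t0 h t))
      by (apply ex_RInt_field_along_path; auto).
    unfold plus; simpl. rewrite Rminus_plus_l_l, Rplus_minus_l.
    eapply Rle_trans; [apply abs_RInt_le with (K := M)|].
    + apply ex_RInt_field_along_path; auto.
    + intros; apply HFb; auto.
    + apply Rmult_le_compat_l; [exact HM | apply clamp_lipschitz; lra].
Qed.

Lemma picard_step_contraction (X Y : R -> nat -> R) (D : R) :
  lipschitz_path_in_box N a r M X -> lipschitz_path_in_box N a r M Y ->
  (forall s, l1_dist N (X s) (Y s) <= D) ->
  forall t, l1_dist N (picard_step F a t0 h X t) (picard_step F a t0 h Y t) <= D / 2.
Proof.
  intros HX HY HD t.
  assert (HD0 : 0 <= D) by (eapply Rle_trans; [apply l1_dist_nonneg | apply (HD t)]).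
  apply Rle_trans with (sumR (fun _ => L * D * h) N).
  - apply sumR_le. intros j Hj. unfold picard_step. rewrite Rminus_plus_l_l.
    eapply Rle_trans; [apply abs_RInt_sub_le with (K := L * D)|].
    + apply ex_RInt_field_along_path; auto.
    + apply ex_RInt_field_along_path; auto.
    + intros x _. eapply Rle_trans; [apply HFl; [apply HX | apply HY | exact Hj]|].
      apply Rmult_le_compat_l; [exact HL | apply HD].
    + apply Rmult_le_compat_l; [nra | apply clamp_dist; lra].
  - rewrite sumR_const. pose proof (pos_INR N).
    replace (INR N * (L * D * h)) with ((INR N * L * h) * D) by ring. nra.
Qed.

Lemma picard_iter_path (m : nat) : lipschitz_path_in_box N a r M (picard_iter F a t0 h m).
Proof.
  induction m as [|m IH]; simpl; [|apply picard_step_path, IH].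
  split; [intros t j _ | intros t s j _]; rewrite Rminus_diag, Rabs_R0; [lra|].
  pose proof (Rabs_pos (t - s)). nra.
Qed.

Lemma picard_iter_succ_dist (m : nat) (t : R) :
  l1_dist N (picard_iter F a t0 h (S m) t) (picard_iter F a t0 h m t) <= INR N * r / 2 ^ m.
Proof.
  revert t. induction m as [|m IH]; intros t.
  - simpl pow. rewrite Rdiv_1_r, <- sumR_const. apply sumR_le. intros j Hj.
    apply (picard_iter_path 1); exact Hj.
  - replace (INR N * r / 2 ^ S m) with ((INR N * r / 2 ^ m) / 2)
      by (simpl pow; field; apply pow_nonzero; lra).
    apply (picard_step_contraction _ _ _ (picard_iter_path (S m)) (picard_iter_path m) IH).
Qed.

Lemma picard_iter_close (m p : nat) (t : R) (j : nat) : (j < N)%nat ->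
  Rabs (picard_iter F a t0 h (p + m) t j - picard_iter F a t0 h m t j) <= 2 * INR N * r / 2 ^ m.
Proof.
  intros Hj. pose proof (pos_INR N).
  assert (Htele : Rabs (picard_iter F a t0 h (p + m) t j - picard_iter F a t0 h m t j)
                  <= 2 * INR N * r * (/ 2 ^ m - / 2 ^ (p + m))).
  { induction p as [|p IH]; [rewrite Rminus_diag, Rabs_R0, Rminus_diag; lra|].
    assert (Hstep := picard_iter_succ_dist (p + m) t).
    eapply Rle_trans with (1 := Rabs_sub_le_l1_dist _ _ _ _ Hj) in Hstep.
    change (S p + m)%nat with (S (p + m)).
    replace (INR N * r / 2 ^ (p + m)) with (2 * INR N * r * (/ 2 ^ (p + m) - / 2 ^ S (p + m)))
      in Hstep by (simpl pow; field; apply pow_nonzero; lra).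
    replace (_ - picard_iter F a t0 h m t j) with
      ((picard_iter F a t0 h (S (p + m)) t j - picard_iter F a t0 h (p + m) t j)
       + (picard_iter F a t0 h (p + m) t j - picard_iter F a t0 h m t j)) by ring.
    eapply Rle_trans; [apply Rabs_triang | lra]. }
  eapply Rle_trans; [exact Htele|].
  assert (0 < / 2 ^ (p + m)) by (apply Rinv_0_lt_compat, pow_lt; lra).
  assert (0 <= 2 * INR N * r) by nra. unfold Rdiv. nra.
Qed.

Lemma picard_limit_close (m : nat) (t : R) (j : nat) : (j < N)%nat ->
  Rabs (picard_limit F a t0 h t j - picard_iter F a t0 h m t j) <= 2 * INR N * r / 2 ^ m.
Proof.
  intros Hj. set (u := fun m => picard_iter F a t0 h m t j).
  assert (Hcv : ex_finite_lim_seq u).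
  { apply ex_lim_seq_cauchy_corr. intros eps.
    destruct (exists_div_pow2_lt (2 * (2 * INR N * r)) eps (cond_pos eps)) as [m0 Hm0].
    exists m0. intros n1 n2 H1 H2.
    pose proof (picard_iter_close m0 (n1 - m0) t j Hj) as E1.
    pose proof (picard_iter_close m0 (n2 - m0) t j Hj) as E2.
    replace (n1 - m0 + m0)%nat with n1 in E1 by lia. replace (n2 - m0 + m0)%nat with n2 in E2 by lia.
    unfold u. replace (_ - _) with ((picard_iter F a t0 h n1 t j - picard_iter F a t0 h m0 t j)
                                  - (picard_iter F a t0 h n2 t j - picard_iter F a t0 h m0 t j)) by ring.
    eapply Rle_lt_trans; [apply Rabs_triang|]. rewrite Rabs_Ropp. unfold Rdiv in *. lra. }
  destruct Hcv as [l Hl]. unfold picard_limit. fold u.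
  rewrite (is_lim_seq_unique u l Hl). apply (Rabs_lim_seq_sub_le u l _ m Hl).
  intros p. apply picard_iter_close, Hj.
Qed.

Lemma picard_limit_path : lipschitz_path_in_box N a r M (picard_limit F a t0 h).
Proof.
  set (C := 2 * INR N * r). split.
  - intros t j Hj. apply (le_of_forall_le_add_div_pow2 _ _ C). intros m.
    pose proof (proj1 (picard_iter_path m) t j Hj). pose proof (picard_limit_close m t j Hj).
    replace (_ - a j) with ((picard_iter F a t0 h m t j - a j)
      + (picard_limit F a t0 h t j - picard_iter F a t0 h m t j)) by ring.
    eapply Rle_trans; [apply Rabs_triang | unfold C; lra].
  - intros t s j Hj. apply (le_of_forall_le_add_div_pow2 _ _ (2 * C)). intros m.
    pose proof (proj2 (picard_iter_path m) t s j Hj).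
    pose proof (picard_limit_close m t j Hj). pose proof (picard_limit_close m s j Hj).
    replace (_ - picard_limit F a t0 h s j) with
      ((picard_limit F a t0 h t j - picard_iter F a t0 h m t j)
       + (picard_iter F a t0 h m t j - picard_iter F a t0 h m s j)
       - (picard_limit F a t0 h s j - picard_iter F a t0 h m s j)) by ring.
    eapply Rle_trans; [apply Rabs_triang|]. rewrite Rabs_Ropp.
    eapply Rle_trans; [apply Rplus_le_compat_r, Rabs_triang|]. unfold C, Rdiv in *. lra.
Qed.

Lemma picard_limit_fixed (t : R) (j : nat) : (j < N)%nat ->
  picard_limit F a t0 h t j = picard_step F a t0 h (picard_limit F a t0 h) t j.
Proof.
  intros Hj. set (X := picard_limit F a t0 h). set (C := 2 * INR N * r).
  apply Rminus_diag_uniq, (eq_0_of_forall_abs_le_div_pow2 _ (C + INR N * C)). intros m.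
  assert (Hp : 0 < 2 ^ m) by (apply pow_lt; lra). pose proof (pos_INR N).
  assert (HD : forall s, l1_dist N (picard_iter F a t0 h m s) (X s) <= INR N * (C / 2 ^ m)).
  { intros s. rewrite <- sumR_const. apply sumR_le. intros l Hl.
    rewrite Rabs_minus_sym. apply picard_limit_close, Hl. }
  pose proof (Rle_trans _ _ _ (Rabs_sub_le_l1_dist N _ _ j Hj)
    (picard_step_contraction _ _ _ (picard_iter_path m) picard_limit_path HD t)) as Hcomp.
  pose proof (picard_limit_close (S m) t j Hj) as Hclose. simpl in Hclose.
  fold X in Hcomp, Hclose. fold C in Hclose.
  replace (X t j - _) with ((X t j - picard_step F a t0 h (picard_iter F a t0 h m) t j)
    + (picard_step F a t0 h (picard_iter F a t0 h m) t j - picard_step F a t0 h X t j)) by ring.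
  eapply Rle_trans; [apply Rabs_triang|].
  assert (0 <= C) by (unfold C; nra).
  replace (C / (2 * 2 ^ m)) with (/ 2 * (C / 2 ^ m)) in Hclose by (field; lra).
  replace ((C + INR N * C) / 2 ^ m) with (C / 2 ^ m + INR N * (C / 2 ^ m)) by (field; lra).
  assert (0 <= C / 2 ^ m) by (apply Rdiv_le_0_compat; lra).
  assert (0 <= INR N * (C / 2 ^ m)) by nra.
  lra.
Qed.

Lemma picard_limit_derive (t : R) (j : nat) : Rabs (t - t0) < h -> (j < N)%nat ->
  is_derive (fun s => picard_limit F a t0 h s j) t (F (picard_limit F a t0 h t) j).
Proof.
  intros Ht Hj. set (X := picard_limit F a t0 h). set (g := fun s => F (X s) j).
  apply Rabs_lt_between' in Ht.
  apply (is_derive_ext_loc (fun s => a j + RInt g t0 s)).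
  - apply (locally_interval _ t (t0 - h) (t0 + h)); simpl; try lra. intros y Hy1 Hy2.
    unfold X. rewrite picard_limit_fixed by exact Hj. unfold picard_step.
    rewrite clamp_id; [reflexivity | apply Rabs_le; lra].
  - rewrite <- (Rplus_0_l (F (X t) j)).
    apply is_derive_Rplus; [apply (is_derive_const (K := R_AbsRing) (V := R_NormedModule))|].
    apply (is_derive_RInt_interior g (t0 - h) (t0 + h)); [|lra|lra].
    intros; apply continuous_field_along_path; [apply picard_limit_path | exact Hj].
Qed.

End Picard.

Lemma picard_local_existence (N : nat) (F : (nat -> R) -> nat -> R) (a : nat -> R) (r M L t0 h : R) :
  0 <= r -> 0 < h -> 0 <= M -> 0 <= L -> M * h <= r -> INR N * L * h <= / 2 ->
  bounded_on_box N a r M F -> lipschitz_on_box N a r L F ->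
  exists X : R -> nat -> R,
    lipschitz_path_in_box N a r M X /\
    (forall t j, Rabs (t - t0) <= h -> (j < N)%nat ->
       X t j = a j + RInt (fun s => F (X s) j) t0 t) /\
    (forall t j, Rabs (t - t0) < h -> (j < N)%nat -> is_derive (fun s => X s j) t (F (X t) j)).
Proof.
  intros Hr Hh HM HL HMh HLh HFb HFl. exists (picard_limit F a t0 h). split; [|split].
  - exact (picard_limit_path N F a r M L t0 h Hr Hh HM HL HMh HLh HFb HFl).
  - intros t j Ht Hj.
    rewrite (picard_limit_fixed N F a r M L t0 h Hr Hh HM HL HMh HLh HFb HFl t j Hj).
    unfold picard_step. rewrite clamp_id by exact Ht. reflexivity.
  - exact (picard_limit_derive N F a r M L t0 h Hr Hh HM HL HMh HLh HFb HFl).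
Qed.

Lemma integral_solutions_eq (N : nat) (F : (nat -> R) -> nat -> R) (X Y : R -> nat -> R)
    (a : nat -> R) (t0 t1 L K : R) :
  0 <= L -> INR N * L * (t1 - t0) <= / 2 ->
  (forall s j, t0 <= s <= t1 -> (j < N)%nat -> X s j = a j + RInt (fun u => F (X u) j) t0 s) ->
  (forall s j, t0 <= s <= t1 -> (j < N)%nat -> Y s j = a j + RInt (fun u => F (Y u) j) t0 s) ->
  (forall s j, t0 <= s <= t1 -> (j < N)%nat -> continuous (fun u => F (X u) j) s) ->
  (forall s j, t0 <= s <= t1 -> (j < N)%nat -> continuous (fun u => F (Y u) j) s) ->
  (forall s j, t0 <= s <= t1 -> (j < N)%nat ->
     Rabs (F (X s) j - F (Y s) j) <= L * l1_dist N (X s) (Y s)) ->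
  (forall s, t0 <= s <= t1 -> l1_dist N (X s) (Y s) <= K) ->
  forall s j, t0 <= s <= t1 -> (j < N)%nat -> X s j = Y s j.
Proof.
  intros HL HLt HX HY HcX HcY Hlip HK s j Hs Hj.
  assert (Hex : forall (Z : R -> nat -> R) u l,
    (forall s l, t0 <= s <= t1 -> (l < N)%nat -> continuous (fun v => F (Z v) l) s) ->
    t0 <= u <= t1 -> (l < N)%nat -> ex_RInt (fun v => F (Z v) l) t0 u).
  { intros Z u l HcZ Hu Hl. apply (ex_RInt_continuous (V := R_CompleteNormedModule)).
    intros z Hz. rewrite Rmin_left, Rmax_right in Hz by lra. apply HcZ; [lra | exact Hl]. }
  assert (Hhalve : forall m u, t0 <= u <= t1 -> l1_dist N (X u) (Y u) <= K / 2 ^ m).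
  { induction m as [|m IH]; intros u Hu; [rewrite pow_O, Rdiv_1_r; apply HK, Hu|].
    assert (HK0 : 0 <= K / 2 ^ m) by (eapply Rle_trans; [apply l1_dist_nonneg | apply (IH u Hu)]).
    apply Rle_trans with (sumR (fun _ => L * (K / 2 ^ m) * (t1 - t0)) N).
    - apply sumR_le. intros l Hl. rewrite (HX u l Hu Hl), (HY u l Hu Hl), Rminus_plus_l_l.
      eapply Rle_trans; [apply abs_RInt_sub_le with (K := L * (K / 2 ^ m))|].
      + apply (Hex X); assumption.
      + apply (Hex Y); assumption.
      + intros x Hx. rewrite Rmin_left, Rmax_right in Hx by lra.
        eapply Rle_trans; [apply Hlip; [lra | exact Hl]|].
        apply Rmult_le_compat_l; [exact HL | apply IH; lra].
      + apply Rmult_le_compat_l; [nra|]. rewrite Rabs_right; lra.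
    - rewrite sumR_const. pose proof (pos_INR N).
      replace (K / 2 ^ S m) with (/ 2 * (K / 2 ^ m)) by (simpl pow; field; apply pow_nonzero; lra).
      replace (INR N * (L * (K / 2 ^ m) * (t1 - t0))) with ((INR N * L * (t1 - t0)) * (K / 2 ^ m))
        by ring.
      apply Rmult_le_compat_r; assumption. }
  apply Rminus_diag_uniq, (eq_0_of_forall_abs_le_div_pow2 _ K). intros m.
  eapply Rle_trans; [apply Rabs_sub_le_l1_dist, Hj | apply Hhalve, Hs].
Qed.



(** * The system and the continuation of bounded solutions *)

(* Coordinates [0 .. n-1] of a state hold [λ_0, ..., λ_(n-1)] and coordinate [n] holds [ρ]. *)
Definition sys_state (n : nat) (lam : nat -> R -> R) (rho : R -> R) (t : R) (j : nat) : R :=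
  if (j <? n)%nat then lam j t else rho t.

Definition sys_field (n : nat) (k cb : R) (x : nat -> R) (j : nat) : R :=
  if (j <? n)%nat then - x j ^ 2 + k / INR n * (x n - cb) else - x n * sumR x n.

Lemma sys_state_lam (n : nat) (lam : nat -> R -> R) (rho : R -> R) (t : R) (i : nat) :
  (i < n)%nat -> sys_state n lam rho t i = lam i t.
Proof. intros Hi. unfold sys_state. apply Nat.ltb_lt in Hi. rewrite Hi. reflexivity. Qed.

Lemma sys_state_rho (n : nat) (lam : nat -> R -> R) (rho : R -> R) (t : R) :
  sys_state n lam rho t n = rho t.
Proof. unfold sys_state. rewrite Nat.ltb_irrefl. reflexivity. Qed.

Lemma sys_field_lam (n : nat) (k cb : R) (x : nat -> R) (i : nat) :
  (i < n)%nat -> sys_field n k cb x i = - x i ^ 2 + k / INR n * (x n - cb).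
Proof. intros Hi. unfold sys_field. apply Nat.ltb_lt in Hi. rewrite Hi. reflexivity. Qed.

Lemma sys_field_rho (n : nat) (k cb : R) (x : nat -> R) :
  sys_field n k cb x n = - x n * sumR x n.
Proof. unfold sys_field. rewrite Nat.ltb_irrefl. reflexivity. Qed.

Definition coord_bounded (N : nat) (B : R) (x : nat -> R) : Prop :=
  forall j, (j < N)%nat -> Rabs (x j) <= B.

Definition sys_bound (n : nat) (k cb B : R) : R := B * B + k * (B + cb) + INR n * B * B.

Definition sys_lipschitz (n : nat) (k B : R) : R := 2 * B + k + (INR n + 1) * B.

Lemma Rdiv_INR_le (k : R) (n : nat) : (1 <= n)%nat -> 0 <= k -> 0 <= k / INR n <= k.
Proof.
  intros Hn Hk. assert (HnR : 1 <= INR n) by (apply (le_INR 1); exact Hn).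
  split; [apply Rdiv_le_0_compat; lra|].
  unfold Rdiv. rewrite <- (Rmult_1_r k) at 2. apply Rmult_le_compat_l; [exact Hk|].
  rewrite <- Rinv_1. apply Rinv_le_contravar; lra.
Qed.

Lemma Rabs_sys_field_le (n : nat) (k cb B : R) (x : nat -> R) (j : nat) :
  (1 <= n)%nat -> 0 < k -> 0 < cb -> 0 <= B -> coord_bounded (S n) B x ->
  Rabs (sys_field n k cb x j) <= sys_bound n k cb B.
Proof.
  intros Hn Hk Hcb HB Hx. unfold sys_bound.
  pose proof (Rdiv_INR_le k n Hn ltac:(lra)). pose proof (pos_INR n).
  assert (Hxn : Rabs (x n) <= B) by (apply Hx; lia).
  assert (0 <= INR n * B * B) by (apply Rmult_le_pos; [apply Rmult_le_pos|]; lra).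
  assert (Hsum : Rabs (sumR x n) <= INR n * B) by (apply Rabs_sumR_le_const; intros; apply Hx; lia).
  destruct (Nat.lt_ge_cases j n) as [Hj | Hj].
  - rewrite sys_field_lam by exact Hj. assert (Hxj : Rabs (x j) <= B) by (apply Hx; lia).
    eapply Rle_trans; [apply Rabs_triang|].
    rewrite Rabs_Ropp, Rabs_mult, (Rabs_right (k / INR n)), <- RPow_abs by lra.
    assert (Rabs (x j) ^ 2 <= B * B)
      by (simpl; rewrite Rmult_1_r; apply Rmult_le_compat; auto using Rabs_pos).
    assert (Rabs (x n - cb) <= B + cb)
      by (eapply Rle_trans; [apply Rabs_triang | rewrite Rabs_Ropp, (Rabs_right cb); lra]).
    assert (k / INR n * Rabs (x n - cb) <= k * (B + cb))
      by (apply Rmult_le_compat; auto using Rabs_pos; lra).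
    lra.
  - unfold sys_field. destruct (Nat.ltb_spec j n) as [Hlt | _]; [lia|].
    rewrite Rabs_mult, Rabs_Ropp.
    assert (Rabs (x n) * Rabs (sumR x n) <= B * (INR n * B))
      by (apply Rmult_le_compat; auto using Rabs_pos).
    nra.
Qed.

Lemma sys_field_lipschitz (n : nat) (k cb B : R) (x y : nat -> R) (j : nat) :
  (1 <= n)%nat -> 0 < k -> 0 <= B -> coord_bounded (S n) B x -> coord_bounded (S n) B y ->
  Rabs (sys_field n k cb x j - sys_field n k cb y j) <= sys_lipschitz n k B * l1_dist (S n) x y.
Proof.
  intros Hn Hk HB Hx Hy. unfold sys_lipschitz.
  pose proof (Rdiv_INR_le k n Hn ltac:(lra)). pose proof (pos_INR n).
  set (S0 := l1_dist n x y).
  assert (HS : l1_dist (S n) x y = S0 + Rabs (x n - y n)) by reflexivity. rewrite HS.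
  assert (0 <= S0) by apply l1_dist_nonneg. pose proof (Rabs_pos (x n - y n)).
  assert (Hxn : Rabs (x n) <= B) by (apply Hx; lia).
  assert (Hyn : Rabs (y n) <= B) by (apply Hy; lia).
  assert (0 <= (INR n + 1) * B) by nra.
  destruct (Nat.lt_ge_cases j n) as [Hj | Hj].
  - rewrite !sys_field_lam by exact Hj.
    assert (Hdj : Rabs (x j - y j) <= S0) by (apply Rabs_sub_le_l1_dist, Hj).
    replace (_ - _) with (- ((x j + y j) * (x j - y j)) + k / INR n * (x n - y n)) by ring.
    eapply Rle_trans; [apply Rabs_triang|].
    rewrite Rabs_Ropp, !Rabs_mult, (Rabs_right (k / INR n)) by lra.
    assert (Rabs (x j + y j) <= 2 * B)
      by (eapply Rle_trans; [apply Rabs_triang|];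
          pose proof (Hx j ltac:(lia)); pose proof (Hy j ltac:(lia)); lra).
    assert (Rabs (x j + y j) * Rabs (x j - y j) <= 2 * B * S0)
      by (apply Rmult_le_compat; auto using Rabs_pos).
    assert (k / INR n * Rabs (x n - y n) <= k * Rabs (x n - y n)) by (apply Rmult_le_compat_r; lra).
    nra.
  - unfold sys_field. destruct (Nat.ltb_spec j n) as [Hlt | _]; [lia|].
    replace (_ - _) with (- (x n * (sumR x n - sumR y n) + (x n - y n) * sumR y n)) by ring.
    rewrite Rabs_Ropp. eapply Rle_trans; [apply Rabs_triang|]. rewrite !Rabs_mult.
    rewrite <- (sumR_Rminus x y).
    assert (Rabs (sumR (fun i => x i - y i) n) <= S0) by apply Rabs_sumR_le.
    assert (Rabs (sumR y n) <= INR n * B) by (apply Rabs_sumR_le_const; intros; apply Hy; lia).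
    assert (Rabs (x n) * Rabs (sumR (fun i => x i - y i) n) <= B * S0)
      by (apply Rmult_le_compat; auto using Rabs_pos).
    assert (Rabs (x n - y n) * Rabs (sumR y n) <= Rabs (x n - y n) * (INR n * B))
      by (apply Rmult_le_compat_l; auto).
    nra.
Qed.

Lemma continuous_sys_field (n : nat) (k cb : R) (Y : R -> nat -> R) (x : R) (j : nat) :
  (forall l, (l < S n)%nat -> continuous (fun u => Y u l) x) ->
  continuous (fun u => sys_field n k cb (Y u) j) x.
Proof.
  intros H. unfold sys_field. destruct (j <? n)%nat eqn:Hj.
  - apply Nat.ltb_lt in Hj.
    apply (continuous_ext (fun u => (-1) * (Y u j * (Y u j * 1)) + k / INR n * (Y u n + - cb)));
      [intros u; simpl; ring|].
    repeat first
      [apply continuous_Rplus | apply continuous_Rmult | apply continuous_const | apply H; lia].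
  - apply (continuous_Rmult (fun u => - Y u n)); [|apply continuous_sumR; intros; apply H; lia].
    apply (continuous_ext (fun u => (-1) * Y u n)); [intros u; simpl; ring|].
    apply continuous_Rmult; [apply continuous_const | apply H; lia].
Qed.

Lemma is_derive_sys_state (n : nat) (k cb rho0 : R) (lam0 : nat -> R) (T : R)
    (lam : nat -> R -> R) (rho : R -> R) (t : R) (j : nat) :
  is_sol n k cb rho0 lam0 T lam rho -> 0 < t < T -> (j < S n)%nat ->
  is_derive (fun s => sys_state n lam rho s j) t (sys_field n k cb (sys_state n lam rho t) j).
Proof.
  intros [_ [_ [_ [_ Hd]]]] Ht Hj. destruct (Hd t Ht) as [Hlam Hrho].
  destruct (Nat.lt_ge_cases j n) as [Hjn | Hjn].
  - rewrite sys_field_lam, sys_state_lam, sys_state_rho by exact Hjn.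
    apply (is_derive_ext (lam j)); [intros; rewrite sys_state_lam by exact Hjn; reflexivity|].
    apply Hlam, Hjn.
  - replace j with n by lia. rewrite sys_field_rho, sys_state_rho.
    rewrite (sumR_ext _ (fun i => lam i t)) by (intros; apply sys_state_lam; assumption).
    apply (is_derive_ext rho); [intros; rewrite sys_state_rho; reflexivity | exact Hrho].
Qed.

Lemma is_sol_of_state (n : nat) (k cb rho0 : R) (lam0 : nat -> R) (tB T : R)
    (lam : nat -> R -> R) (rho : R -> R) (G : R -> nat -> R) :
  0 < tB -> is_sol n k cb rho0 lam0 tB lam rho ->
  (forall t j, 0 <= t < tB -> G t j = sys_state n lam rho t j) ->
  (forall t j, 0 < t < T -> (j < S n)%nat ->
     is_derive (fun s => G s j) t (sys_field n k cb (G t) j)) ->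
  is_sol n k cb rho0 lam0 T (fun i t => G t i) (fun t => G t n).
Proof.
  intros HtB [Hr0 [Hl0 [Hrc [Hlc _]]]] HG Hd.
  assert (HG0 : forall j, G 0 j = sys_state n lam rho 0 j) by (intros; apply HG; lra).
  assert (Hnear : forall j, at_right 0 (fun t => sys_state n lam rho t j = G t j)).
  { intros j. exists (mkposreal _ HtB). intros y Hy Hy0. change (Rabs (y - 0) < tB) in Hy.
    rewrite Rminus_0_r in Hy. apply Rabs_lt_between in Hy. symmetry. apply HG. lra. }
  split; [|split; [|split; [|split]]].
  - rewrite HG0, sys_state_rho. exact Hr0.
  - intros i Hi. rewrite HG0, sys_state_lam by exact Hi. apply Hl0, Hi.
  - rewrite HG0, sys_state_rho. apply (filterlim_ext_loc rho); [|exact Hrc].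
    apply (filter_imp _ _ (fun t Ht => eq_trans (eq_sym (sys_state_rho n lam rho t)) Ht) (Hnear n)).
  - intros i Hi. rewrite HG0, sys_state_lam by exact Hi.
    apply (filterlim_ext_loc (lam i)); [|apply Hlc, Hi].
    apply (filter_imp _ _ (fun t Ht => eq_trans (eq_sym (sys_state_lam n lam rho t i Hi)) Ht) (Hnear i)).
  - intros t Ht. split.
    + intros i Hi. pose proof (Hd t i Ht ltac:(lia)) as H.
      rewrite sys_field_lam in H by exact Hi. exact H.
    + pose proof (Hd t n Ht ltac:(lia)) as H. rewrite sys_field_rho in H. exact H.
Qed.


Lemma coord_bounded_of_in_box (N : nat) (a : nat -> R) (r B : R) (x : nat -> R) :
  coord_bounded N B a -> in_box N a r x -> coord_bounded N (B + r) x.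
Proof.
  intros Ha Hx j Hj. pose proof (Ha j Hj). pose proof (Hx j Hj).
  replace (x j) with ((x j - a j) + a j) by ring.
  eapply Rle_trans; [apply Rabs_triang | lra].
Qed.

Lemma exists_step_size (M L : R) : 0 <= M -> 0 <= L ->
  exists h, 0 < h /\ M * h <= 1 /\ L * h <= / 2.
Proof.
  intros HM HL. set (D := 2 * (M + 1) * (L + 1)).
  assert (HD : 0 < D) by (unfold D; nra).
  exists (/ D). split; [apply Rinv_0_lt_compat, HD|].
  split; apply (Rmult_le_reg_r D); try exact HD; rewrite Rmult_assoc, Rinv_l by lra; unfold D; nra.
Qed.

Lemma sys_state_eq_integral_solution (n : nat) (k cb rho0 : R) (lam0 : nat -> R) (tB t1 h B : R)
    (lam : nat -> R -> R) (rho : R -> R) (X : R -> nat -> R) :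
  (1 <= n)%nat -> 0 < k -> 0 <= B -> 0 < t1 < tB -> tB - t1 <= h ->
  INR (S n) * sys_lipschitz n k B * h <= / 2 ->
  is_sol n k cb rho0 lam0 tB lam rho ->
  (forall t, t1 <= t < tB -> coord_bounded (S n) B (sys_state n lam rho t)) ->
  (forall t, coord_bounded (S n) B (X t)) ->
  (forall t j, (j < S n)%nat -> continuous (fun s => X s j) t) ->
  (forall t j, t1 <= t <= t1 + h -> (j < S n)%nat ->
     X t j = sys_state n lam rho t1 j + RInt (fun s => sys_field n k cb (X s) j) t1 t) ->
  forall t j, t1 <= t < tB -> (j < S n)%nat -> sys_state n lam rho t j = X t j.
Proof.
  intros Hn Hk HB Ht1 Hh HLh Hsol HYb HXb HXc HXint t j Ht Hj.
  set (Y := sys_state n lam rho). pose proof (pos_INR (S n)).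
  assert (HLb : 0 <= sys_lipschitz n k B) by (unfold sys_lipschitz; pose proof (pos_INR n); nra).
  assert (HYc : forall u l, 0 < u < tB -> (l < S n)%nat -> continuous (fun s => Y s l) u)
    by (intros; eapply is_derive_continuous, is_derive_sys_state; eassumption).
  apply (integral_solutions_eq (S n) (sys_field n k cb) Y X (Y t1) t1 t (sys_lipschitz n k B)
    (INR (S n) * (2 * B))); try assumption.
  - apply Rle_trans with (INR (S n) * sys_lipschitz n k B * h);
      [apply Rmult_le_compat_l; nra | exact HLh].
  - intros u l Hu Hl. apply (eq_add_RInt_of_derive (fun v => Y v l) _ 0 tB); try lra.
    + intros x Hx. eapply is_derive_sys_state; eassumption.
    + intros x Hx. apply continuous_sys_field. intros. apply HYc; assumption.
  - intros u l Hu Hl. apply HXint; [lra | exact Hl].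
  - intros u l Hu Hl. apply continuous_sys_field. intros. apply HYc; [lra | assumption].
  - intros u l Hu Hl. apply continuous_sys_field. intros. apply HXc; assumption.
  - intros u l Hu Hl. apply sys_field_lipschitz; [assumption .. | apply HYb; lra | apply HXb].
  - intros u Hu. unfold l1_dist. rewrite <- sumR_const. apply sumR_le. intros l Hl.
    pose proof (HYb u ltac:(lra) l Hl). pose proof (HXb u l Hl).
    eapply Rle_trans; [apply Rabs_triang|]. rewrite Rabs_Ropp. unfold Y in *; lra.
  - lra.
Qed.

Lemma sys_solution_extends (n : nat) (k cb rho0 : R) (lam0 : nat -> R) (tB s0 B0 : R)
    (lam : nat -> R -> R) (rho : R -> R) :
  (1 <= n)%nat -> 0 < k -> 0 < cb -> 0 < s0 < tB -> is_sol n k cb rho0 lam0 tB lam rho ->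
  (forall t, s0 <= t < tB -> coord_bounded (S n) B0 (sys_state n lam rho t)) ->
  exists T G, tB < T /\ (forall t j, 0 <= t < tB -> G t j = sys_state n lam rho t j) /\
    (forall t j, 0 < t < T -> (j < S n)%nat ->
       is_derive (fun s => G s j) t (sys_field n k cb (G t) j)).
Proof.
  intros Hn Hk Hcb Hs0 Hsol Hbd.
  set (Y := sys_state n lam rho). pose proof (pos_INR n). pose proof (pos_INR (S n)).
  assert (HB0 : 0 <= B0)
    by (eapply Rle_trans; [apply Rabs_pos | exact (Hbd s0 ltac:(lra) 0%nat ltac:(lia))]).
  set (B := B0 + 1). set (Mb := sys_bound n k cb B). set (Lb := sys_lipschitz n k B).
  assert (HMb : 0 <= Mb)
    by (unfold Mb, sys_bound, B;
        assert (0 <= INR n * (B0 + 1) * (B0 + 1)) by (apply Rmult_le_pos; nra); nra).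
  assert (HLb : 0 <= Lb) by (unfold Lb, sys_lipschitz, B; nra).
  destruct (exists_step_size Mb (INR (S n) * Lb)) as [h [Hh [HMh HLh]]]; [assumption | nra |].
  set (t1 := Rmax s0 (tB - h / 2)).
  assert (Ht1 : s0 <= t1 < tB /\ tB < t1 + h)
    by (unfold t1; pose proof (Rmax_l s0 (tB - h / 2)); pose proof (Rmax_r s0 (tB - h / 2));
        split; [split; [lra | apply Rmax_lub_lt; lra] | lra]).
  assert (Hbox : forall x, in_box (S n) (Y t1) 1 x -> coord_bounded (S n) B x)
    by (intros; apply coord_bounded_of_in_box with (Y t1); [apply Hbd; lra | assumption]).
  destruct (picard_local_existence (S n) (sys_field n k cb) (Y t1) 1 Mb Lb t1 h)
    as [X [HXp [HXint HXd]]]; try assumption; try lra.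
  { intros x Hx j Hj. apply Rabs_sys_field_le; [assumption .. | unfold B; lra | apply Hbox, Hx]. }
  { intros x y Hx Hy j Hj.
    apply sys_field_lipschitz; [assumption .. | unfold B; lra | apply Hbox, Hx | apply Hbox, Hy]. }
  assert (HYX : forall t j, t1 <= t < tB -> (j < S n)%nat -> Y t j = X t j).
  { apply (sys_state_eq_integral_solution n k cb rho0 lam0 tB t1 h B); try assumption; try lra.
    - unfold B; lra.
    - intros t Ht j Hj. pose proof (Hbd t ltac:(lra) j Hj). unfold B; lra.
    - intros t. apply Hbox, HXp.
    - intros t j Hj. eapply lipschitz_path_continuous; eassumption.
    - intros t j Ht Hj. apply HXint; [apply Rabs_le; lra | exact Hj]. }
  exists (t1 + h), (fun t j => if Rlt_dec t tB then Y t j else X t j).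
  split; [lra | split].
  - intros t j Ht. destruct Rlt_dec; [reflexivity | lra].
  - intros t j Ht Hj.
    replace (sys_field n k cb (fun l => if Rlt_dec t tB then Y t l else X t l) j)
      with (if Rlt_dec t tB then sys_field n k cb (Y t) j else sys_field n k cb (X t) j)
      by (destruct Rlt_dec; reflexivity).
    apply (is_derive_glue (fun s => Y s j) (fun s => X s j)
      (fun s => sys_field n k cb (Y s) j) (fun s => sys_field n k cb (X s) j) 0 t1 tB (t1 + h) t);
      try lra.
    + intros x Hx. eapply is_derive_sys_state; eassumption.
    + intros x Hx. apply HXd; [apply Rabs_lt_between; lra | exact Hj].
    + intros x Hx. apply HYX; [lra | exact Hj].
Qed.

Lemma maximal_sol_unbounded (n : nat) (k cb rho0 : R) (lam0 : nat -> R) (tB s0 B0 : R)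
    (lam : nat -> R -> R) (rho : R -> R) :
  (1 <= n)%nat -> 0 < k -> 0 < cb -> 0 < s0 < tB -> maximal_sol n k cb rho0 lam0 tB lam rho ->
  ~ (forall t, s0 <= t < tB -> coord_bounded (S n) B0 (sys_state n lam rho t)).
Proof.
  intros Hn Hk Hcb Hs0 [Hsol Hmax] Hbd.
  destruct (sys_solution_extends n k cb rho0 lam0 tB s0 B0 lam rho) as [T [G [HT [HG HGd]]]];
    try assumption.
  apply (Hmax T (fun i t => G t i) (fun t => G t n) HT).
  - apply (is_sol_of_state n k cb rho0 lam0 tB T lam rho G); try assumption; lra.
  - intros t Ht. split; [|intros i Hi]; rewrite HG by exact Ht;
      [apply sys_state_rho | apply sys_state_lam, Hi].
Qed.

(** * Estimates for a solution with bounded [∫ ρ] *)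

Lemma uniform_bound_of_pointwise (P : nat -> R -> Prop) (N : nat) :
  (forall i B B', B <= B' -> P i B -> P i B') -> (forall i, (i < N)%nat -> exists B, P i B) ->
  exists B, 0 <= B /\ forall i, (i < N)%nat -> P i B.
Proof.
  intros Hmono. induction N as [|N IH]; intros H; [exists 0; split; [lra | intros; lia]|].
  destruct IH as [B [HB HP]]; [intros; apply H; lia|].
  destruct (H N ltac:(lia)) as [BN HBN].
  exists (Rmax B BN). split; [eapply Rle_trans; [exact HB | apply Rmax_l]|].
  intros i Hi. destruct (Nat.eq_dec i N) as [-> | Hne].
  - apply (Hmono N BN); [apply Rmax_r | exact HBN].
  - apply (Hmono i B); [apply Rmax_l | apply HP; lia].
Qed.

Lemma is_sol_rho_pos (n : nat) (k cb rho0 : R) (lam0 : nat -> R) (T : R)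
    (lam : nat -> R -> R) (rho : R -> R) :
  0 < rho0 -> is_sol n k cb rho0 lam0 T lam rho -> forall t, 0 < t < T -> 0 < rho t.
Proof.
  intros Hrho0 [H0 [_ [Hrc [_ Hode]]]] t Ht.
  destruct (proj1 (filterlim_locally rho (rho 0)) Hrc (mkposreal _ Hrho0)) as [e He].
  set (d := Rmin (e / 2) t).
  assert (Hd : 0 < d <= t)
    by (split; [apply Rmin_glb_lt; [pose proof (cond_pos e); lra | lra] | apply Rmin_r]).
  assert (Hrho_d : 0 < rho d).
  { assert (Hball : ball 0 e d).
    { change (Rabs (d - 0) < e). rewrite Rminus_0_r, Rabs_right by lra.
      pose proof (Rmin_l (e / 2) t). pose proof (cond_pos e). unfold d. lra. }
    specialize (He d Hball (proj1 Hd)). change (Rabs (rho d - rho 0) < rho0) in He.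
    rewrite H0 in He. apply Rabs_lt_between in He. lra. }
  set (sum_lam := fun u => sumR (fun i => lam i u) n).
  assert (Hsum_cont : forall x, 0 < x < T -> continuous sum_lam x).
  { intros x Hx. apply (continuous_sumR (fun u i => lam i u)). intros i Hi.
    apply (is_derive_continuous _ _ _ (proj1 (Hode x Hx) i Hi)). }
  (* [ρ' = - ρ Σ λ_i] makes [ρ exp (∫_d Σ λ_i)] constant. *)
  set (Phi := fun x => rho x * exp (RInt sum_lam d x)).
  assert (HPhi : Phi d <= Phi t).
  { apply (nondecreasing_of_derive_nonneg Phi (fun _ => 0) 0 T); try lra.
    - intros x Hx. unfold Phi.
      replace 0 with (- rho x * sum_lam x * exp (RInt sum_lam d x)
                      + rho x * (sum_lam x * exp (RInt sum_lam d x))) by ring.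
      apply (Derive.is_derive_mult rho (fun y => exp (RInt sum_lam d y))); [apply (proj2 (Hode x Hx))|].
      apply (is_derive_comp exp (fun y => RInt sum_lam d y) x (exp (RInt sum_lam d x)) (sum_lam x));
        [apply is_derive_exp|].
      apply (is_derive_RInt_interior sum_lam 0 T); [exact Hsum_cont | lra | exact Hx].
    - intros; lra. }
  unfold Phi in HPhi. rewrite (RInt_point (V := R_CompleteNormedModule)) in HPhi.
  change (@zero R_CompleteNormedModule) with 0 in HPhi. rewrite exp_0, Rmult_1_r in HPhi.
  pose proof (exp_pos (RInt sum_lam d t)). nra.
Qed.

Lemma is_sol_is_derive_RInt_rho (n : nat) (k cb rho0 : R) (lam0 : nat -> R) (T : R)
    (lam : nat -> R -> R) (rho : R -> R) :
  is_sol n k cb rho0 lam0 T lam rho -> forall t, 0 < t < T ->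
  is_derive (fun x => RInt rho 0 x) t (rho t).
Proof.
  intros [_ [_ [Hrc [_ Hd]]]] t Ht. apply (is_derive_RInt_0 rho T); [exact Hrc | | exact Ht].
  intros x Hx. apply (is_derive_continuous _ _ _ (proj2 (Hd x Hx))).
Qed.

Section Bounded_integral.

Variables (n : nat) (k cb tB M : R) (lam : nat -> R -> R) (rho I : R -> R).
Hypotheses (Hn : (1 <= n)%nat) (Hk : 0 < k) (Hcb : 0 < cb)
  (Hlam : forall i t, (i < n)%nat -> 0 < t < tB ->
     is_derive (lam i) t (- lam i t ^ 2 + k / INR n * (rho t - cb)))
  (Hrho : forall t, 0 < t < tB -> is_derive rho t (- rho t * sumR (fun j => lam j t) n))
  (Hrho_pos : forall t, 0 < t < tB -> 0 < rho t)
  (HI : forall t, 0 < t < tB -> is_derive I t (rho t))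
  (HIM : forall t, 0 < t < tB -> I t <= M).

Lemma I_nondecreasing (a b : R) : 0 < a -> a <= b -> b < tB -> I a <= I b.
Proof.
  intros Ha Hab Hb. apply (nondecreasing_of_derive_nonneg I rho 0 tB); try assumption.
  intros x Hx. left. apply Hrho_pos, Hx.
Qed.

Lemma lam_sub_I_nonincreasing (i : nat) (tau t : R) : (i < n)%nat -> 0 < tau -> tau <= t -> t < tB ->
  lam i t - k / INR n * I t <= lam i tau - k / INR n * I tau.
Proof.
  intros Hi Htau Ht HtB. pose proof (Rdiv_INR_le k n Hn ltac:(lra)).
  apply (nonincreasing_of_derive_nonpos (fun x => lam i x - k / INR n * I x)
    (fun x => (- lam i x ^ 2 + k / INR n * (rho x - cb)) - k / INR n * rho x) 0 tB); try assumption.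
  - intros x Hx. apply is_derive_Rminus; [apply Hlam; assumption | apply is_derive_scal, HI, Hx].
  - intros x Hx. pose proof (pow2_ge_0 (lam i x)). nra.
Qed.

Lemma lam_bounded_above (s0 : R) : 0 < s0 < tB ->
  exists A, 0 <= A /\ forall j t, (j < n)%nat -> s0 <= t < tB -> lam j t <= A.
Proof.
  intros Hs0. pose proof (Rdiv_INR_le k n Hn ltac:(lra)).
  assert (HIs0 : I s0 <= M) by (apply HIM; lra).
  assert (Hsum : 0 <= sumR (fun j => Rabs (lam j s0)) n) by (apply sumR_nonneg; intros; apply Rabs_pos).
  exists (sumR (fun j => Rabs (lam j s0)) n + k / INR n * (M - I s0)). split; [nra|].
  intros j t Hj Ht.
  pose proof (lam_sub_I_nonincreasing j s0 t Hj ltac:(lra) ltac:(lra) ltac:(lra)).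
  assert (I t <= M) by (apply HIM; lra).
  assert (Rabs (lam j s0) <= sumR (fun j => Rabs (lam j s0)) n)
    by (apply (le_sumR (fun j => Rabs (lam j s0))); [intros; apply Rabs_pos | exact Hj]).
  pose proof (RRle_abs (lam j s0)). nra.
Qed.

Lemma lam_tends_to_m_infty (i : nat) (s0 : R) : (i < n)%nat -> 0 < s0 < tB ->
  (forall B, exists t, s0 <= t < tB /\ lam i t < - B) ->
  forall B, exists tau, s0 <= tau < tB /\ forall t, tau <= t < tB -> lam i t < - B.
Proof.
  intros Hi Hs0 Hunb B. pose proof (Rdiv_INR_le k n Hn ltac:(lra)).
  destruct (Hunb (B + k / INR n * (M - I s0))) as [tau [Htau Hlt]].
  exists tau. split; [exact Htau|]. intros t Ht.
  pose proof (lam_sub_I_nonincreasing i tau t Hi ltac:(lra) (proj1 Ht) (proj2 Ht)).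
  assert (I s0 <= I tau) by (apply I_nondecreasing; lra).
  assert (I t <= M) by (apply HIM; lra). nra.
Qed.

Lemma inv_lam_increment_le (i : nat) (tau : R) : (i < n)%nat -> 0 < tau ->
  (forall t, tau <= t < tB -> lam i t < - (1 + k * cb)) ->
  forall s t, tau < s -> s <= t -> t < tB -> / lam i t - / lam i s <= 2 * (t - s).
Proof.
  intros Hi Htau Hneg s t Hs Hst Ht. pose proof (Rdiv_INR_le k n Hn ltac:(lra)).
  assert (Hneg1 : forall x, tau <= x < tB -> lam i x < -1) by (intros x Hx; pose proof (Hneg x Hx); nra).
  enough (/ lam i t - 2 * t <= / lam i s - 2 * s) by lra.
  apply (nonincreasing_of_derive_nonpos (fun y => / lam i y - 2 * y)
    (fun y => - (- lam i y ^ 2 + k / INR n * (rho y - cb)) / lam i y ^ 2 - 2) tau tB); try lra.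
  - intros x Hx. apply is_derive_Rminus; [|apply is_derive_Rscal_id].
    apply is_derive_inv; [apply Hlam; [exact Hi | lra]|]. pose proof (Hneg1 x ltac:(lra)). lra.
  - intros x Hx. pose proof (Hneg x ltac:(lra)). pose proof (Hneg1 x ltac:(lra)).
    pose proof (Hrho_pos x ltac:(lra)).
    assert (Hsq : 1 + k * cb <= lam i x ^ 2) by nra.
    assert (Hl0 : lam i x <> 0) by lra.
    replace (- (- lam i x ^ 2 + k / INR n * (rho x - cb)) / lam i x ^ 2 - 2)
      with (k / INR n * (cb - rho x) / lam i x ^ 2 - 1)
      by (field; split; [apply not_0_INR; lia | exact Hl0]).
    enough (k / INR n * (cb - rho x) / lam i x ^ 2 <= 1) by lra.
    apply (Rmult_le_reg_r (lam i x ^ 2)); [nra|].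
    unfold Rdiv. rewrite Rmult_assoc, Rinv_l, Rmult_1_r, Rmult_1_l by nra. nra.
Qed.

Lemma neg_lam_ge_inv_dist (i : nat) (s0 : R) : (i < n)%nat -> 0 < s0 < tB ->
  (forall B, exists tau, s0 <= tau < tB /\ forall t, tau <= t < tB -> lam i t < - B) ->
  exists tau, s0 <= tau < tB /\
    forall t, tau < t < tB -> lam i t < -1 /\ / (2 * (tB - t)) <= - lam i t.
Proof.
  intros Hi Hs0 Hdiv.
  destruct (Hdiv (1 + k * cb)) as [tau [Htau Hneg]].
  exists tau. split; [exact Htau|]. intros s Hs.
  assert (Hls : lam i s < -1) by (pose proof (Hneg s ltac:(lra)); nra). split; [exact Hls|].
  (* [1 / λ_i] increases at rate at most 2 and tends to 0 at [tB]. *)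
  assert (Hinv_s : - / lam i s <= 2 * (tB - s)).
  { apply (le_of_forall_le_add_div_pow2 _ _ 1). intros m.
    destruct (Hdiv (2 ^ m)) as [tau' [Htau' Hneg']].
    set (t := Rmax s tau').
    assert (Ht : s <= t < tB /\ tau' <= t)
      by (unfold t; split; [split; [apply Rmax_l | apply Rmax_lub_lt; lra] | apply Rmax_r]).
    pose proof (Hneg' t ltac:(lra)) as Hlt. pose proof (pow_lt 2 m ltac:(lra)).
    assert (- / lam i t <= 1 / 2 ^ m).
    { rewrite <- Rinv_opp. unfold Rdiv. rewrite Rmult_1_l. left. apply Rinv_lt_contravar; nra. }
    pose proof (inv_lam_increment_le i tau Hi ltac:(lra) Hneg s t ltac:(lra) (proj1 (proj1 Ht))
      (proj2 (proj1 Ht))).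
    lra. }
  rewrite <- Rinv_opp in Hinv_s. rewrite <- (Rinv_inv (- lam i s)).
  apply Rinv_le_contravar; [apply Rinv_0_lt_compat; lra | exact Hinv_s].
Qed.

Lemma ln_rho_sub_ln_neg_lam_nondecreasing (i : nat) (s0 A tau : R) :
  (i < n)%nat -> 0 < s0 <= tau -> 0 <= A ->
  (forall j t, (j < n)%nat -> s0 <= t < tB -> lam j t <= A) ->
  (forall t, tau < t < tB -> lam i t < -1) ->
  forall a b, tau < a -> a <= b -> b < tB ->
    ln (rho a) - ln (- lam i a) + (INR n * A + k * cb) * a
    <= ln (rho b) - ln (- lam i b) + (INR n * A + k * cb) * b.
Proof.
  intros Hi Htau HA HAb Hneg a b Ha Hab Hb.
  pose proof (Rdiv_INR_le k n Hn ltac:(lra)). pose proof (pos_INR n).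
  apply (nondecreasing_of_derive_nonneg (fun x => ln (rho x) - ln (- lam i x) + (INR n * A + k * cb) * x)
    (fun x => (- rho x * sumR (fun j => lam j x) n) / rho x
              - (- (- lam i x ^ 2 + k / INR n * (rho x - cb))) / (- lam i x) + (INR n * A + k * cb))
    tau tB); try assumption.
  - intros x Hx. pose proof (Hneg x Hx).
    apply is_derive_Rplus; [apply is_derive_Rminus|apply is_derive_Rscal_id].
    + apply is_derive_ln_comp; [apply Hrho | apply Hrho_pos]; lra.
    + apply (is_derive_ln_comp (fun y => - lam i y)); [apply is_derive_Ropp, Hlam; [exact Hi|] |]; lra.
  - intros x Hx. pose proof (Hneg x Hx). pose proof (Hrho_pos x ltac:(lra)).
    assert (Hsum : sumR (fun j => lam j x) n - lam i x <= INR n * A)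
      by (apply (sumR_sub_le (fun j => lam j x)); [intros; apply HAb; [|lra] | |]; assumption).
    replace ((- rho x * sumR (fun j => lam j x) n) / rho x
             - (- (- lam i x ^ 2 + k / INR n * (rho x - cb))) / (- lam i x) + (INR n * A + k * cb))
      with (INR n * A - (sumR (fun j => lam j x) n - lam i x)
            + k / INR n * rho x / (- lam i x) + (k * cb - k / INR n * cb / (- lam i x)))
      by (field; repeat split; first [apply not_0_INR; lia | lra]).
    assert (0 <= k / INR n * rho x / (- lam i x)) by (apply Rdiv_le_0_compat; nra).
    enough (k / INR n * cb / (- lam i x) <= k * cb) by lra.
    assert (0 < / (- lam i x) <= 1)
      by (split; [apply Rinv_0_lt_compat | rewrite <- Rinv_1; apply Rinv_le_contravar]; lra).
    set (c := k / INR n) in *. unfold Rdiv.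
    assert (c * cb * / (- lam i x) <= c * cb)
      by (rewrite <- (Rmult_1_r (c * cb)) at 2; apply Rmult_le_compat_l; nra).
    nra.
Qed.

Lemma rho_ge_inv_dist (i : nat) (s0 A tau : R) : (i < n)%nat -> 0 < s0 -> s0 <= tau < tB -> 0 <= A ->
  (forall j t, (j < n)%nat -> s0 <= t < tB -> lam j t <= A) ->
  (forall t, tau < t < tB -> lam i t < -1 /\ / (2 * (tB - t)) <= - lam i t) ->
  exists c0 s1, 0 < c0 /\ tau < s1 < tB /\ forall t, s1 < t < tB -> c0 / (tB - t) <= rho t.
Proof.
  intros Hi Hs0 Htau HA HAb Hrate. pose proof (pos_INR n).
  set (K := INR n * A + k * cb). set (q := fun x => ln (rho x) - ln (- lam i x) + K * x).
  set (s1 := (tau + tB) / 2). set (c0 := exp (q s1 - K * tB) / 2).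
  exists c0, s1. split; [apply Rdiv_lt_0_compat; [apply exp_pos | lra]|]. split; [unfold s1; lra|].
  intros t Ht. destruct (Hrate t ltac:(unfold s1 in *; lra)) as [Hlt Hinv].
  pose proof (Hrho_pos t ltac:(unfold s1 in *; lra)).
  assert (Hqt : q s1 <= q t).
  { apply (ln_rho_sub_ln_neg_lam_nondecreasing i s0 A tau); try assumption; try (unfold s1 in *; lra).
    intros x Hx. apply Hrate, Hx. }
  assert (Hln : q s1 - K * tB + ln (- lam i t) <= ln (rho t)).
  { unfold q at 2 in Hqt.
    assert (K * t <= K * tB) by (apply Rmult_le_compat_l; [unfold K; nra | lra]). lra. }
  apply exp_le_exp_of_le in Hln. rewrite exp_plus, !exp_ln in Hln by lra.
  apply Rle_trans with (exp (q s1 - K * tB) * / (2 * (tB - t))).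
  - unfold c0. right. field. lra.
  - apply Rle_trans with (exp (q s1 - K * tB) * - lam i t); [|exact Hln].
    apply Rmult_le_compat_l; [left; apply exp_pos | exact Hinv].
Qed.

Lemma lam_bounded_below (i : nat) (s0 : R) : (i < n)%nat -> 0 < s0 < tB ->
  exists B, forall t, s0 <= t < tB -> - B <= lam i t.
Proof.
  intros Hi Hs0. apply NNPP. intros Hno.
  assert (Hunb : forall B, exists t, s0 <= t < tB /\ lam i t < - B).
  { intros B. apply NNPP. intros H. apply Hno. exists B. intros t Ht.
    apply Rnot_lt_le. intros Hlt. apply H. exists t. split; assumption. }
  destruct (lam_bounded_above s0 Hs0) as [A [HA HAb]].
  destruct (neg_lam_ge_inv_dist i s0 Hi Hs0 (lam_tends_to_m_infty i s0 Hi Hs0 Hunb))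
    as [tau [Htau Hrate]].
  destruct (rho_ge_inv_dist i s0 A tau Hi (proj1 Hs0) Htau HA HAb Hrate) as [c0 [s1 [Hc0 [Hs1 Hlow]]]].
  destruct (unbounded_of_derive_ge_inv_dist I rho s1 tB c0 (proj2 Hs1) Hc0) with (M := M)
    as [t [Ht HMt]].
  - intros x Hx. apply HI. lra.
  - intros x Hx. apply Hlow, Hx.
  - pose proof (HIM t ltac:(lra)). lra.
Qed.

Lemma lam_abs_bounded (s0 : R) : 0 < s0 < tB ->
  exists B, 0 <= B /\ forall i t, (i < n)%nat -> s0 <= t < tB -> Rabs (lam i t) <= B.
Proof.
  intros Hs0. destruct (lam_bounded_above s0 Hs0) as [A [HA HAb]].
  destruct (uniform_bound_of_pointwise (fun i B => forall t, s0 <= t < tB -> - B <= lam i t) n)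
    as [Bl [HBl HBlb]].
  - intros i B B' HBB' HP t Ht. specialize (HP t Ht). lra.
  - intros i Hi. apply lam_bounded_below; assumption.
  - exists (Rmax A Bl). split; [eapply Rle_trans; [exact HA | apply Rmax_l]|].
    intros i t Hi Ht. pose proof (HBlb i Hi t Ht). pose proof (HAb i t Hi Ht).
    pose proof (Rmax_l A Bl). pose proof (Rmax_r A Bl). apply Rabs_le. lra.
Qed.

Lemma rho_bounded (s0 B : R) : 0 < s0 < tB -> 0 <= B ->
  (forall i t, (i < n)%nat -> s0 <= t < tB -> Rabs (lam i t) <= B) ->
  forall t, s0 <= t < tB -> rho t <= rho s0 * exp (INR n * B * tB).
Proof.
  intros Hs0 HB Hlamb t Ht. pose proof (pos_INR n).
  destruct (MVT_open_interval (fun x => ln (rho x))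
    (fun x => (- rho x * sumR (fun j => lam j x) n) / rho x)
    0 tB s0 t) as [x [Hx Hmvt]]; try lra.
  { intros x Hx. apply is_derive_ln_comp; [apply Hrho | apply Hrho_pos]; exact Hx. }
  pose proof (Hrho_pos x ltac:(lra)). pose proof (Hrho_pos s0 ltac:(lra)).
  replace ((- rho x * sumR (fun j => lam j x) n) / rho x) with (- sumR (fun j => lam j x) n) in Hmvt
    by (field; lra).
  assert (Hsum : Rabs (sumR (fun j => lam j x) n) <= INR n * B)
    by (apply Rabs_sumR_le_const; intros; apply Hlamb; [assumption | lra]).
  apply Rabs_le_between in Hsum.
  assert (Hln : ln (rho t) <= ln (rho s0) + INR n * B * tB).
  { assert (0 <= INR n * B) by nra. nra. }
  apply exp_le_exp_of_le in Hln. rewrite exp_plus, !exp_ln in Hln by (apply Hrho_pos; lra). exact Hln.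
Qed.

Lemma state_bounded_near_blowup (s0 : R) : 0 < s0 < tB ->
  exists B, forall t, s0 <= t < tB -> coord_bounded (S n) B (sys_state n lam rho t).
Proof.
  intros Hs0. destruct (lam_abs_bounded s0 Hs0) as [B [HB Hlamb]].
  set (Brho := rho s0 * exp (INR n * B * tB)).
  exists (Rmax B Brho). intros t Ht j Hj. destruct (Nat.lt_ge_cases j n) as [Hjn | Hjn].
  - rewrite sys_state_lam by exact Hjn. eapply Rle_trans; [apply Hlamb; assumption | apply Rmax_l].
  - replace j with n by lia. rewrite sys_state_rho, Rabs_right by (left; apply Hrho_pos; lra).
    eapply Rle_trans; [apply (rho_bounded s0 B); assumption | apply Rmax_r].
Qed.

End Bounded_integral.

Theorem proposition2p5 (n : nat) (k cb rho0 tB : R) (lam0 : nat -> R)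
    (lam : nat -> R -> R) (rho : R -> R) :
  (2 <= n)%nat -> 0 < k -> 0 < cb -> 0 < rho0 ->
  (forall i, (S i < n)%nat -> lam0 i <= lam0 (S i)) ->
  0 < tB ->
  maximal_sol n k cb rho0 lam0 tB lam rho ->
  filterlim (fun t => RInt rho 0 t) (at_left tB) (Rbar_locally p_infty).
Proof.
  intros Hn Hk Hcb Hrho0 _ HtB Hmax.
  pose proof Hmax as [Hsol _]. pose proof Hsol as [_ [_ [_ [_ Hode]]]].
  set (I := fun t => RInt rho 0 t).
  pose proof (is_sol_rho_pos n k cb rho0 lam0 tB lam rho Hrho0 Hsol) as Hrho_pos.
  pose proof (is_sol_is_derive_RInt_rho n k cb rho0 lam0 tB lam rho Hsol) as HI.
  apply (filterlim_at_left_p_infty_of_nondecreasing I 0 tB).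
  { intros x y Hx Hy. apply (nondecreasing_of_derive_nonneg I rho 0 tB); try lra; [exact HI|].
    intros; left; apply Hrho_pos; assumption. }
  intros M. apply NNPP. intros Hbounded.
  assert (HIM : forall t, 0 < t < tB -> I t <= M).
  { intros t Ht. apply Rnot_lt_le. intros HMt. apply Hbounded. exists t. split; assumption. }
  destruct (state_bounded_near_blowup n k cb tB M lam rho I) with (s0 := tB / 2) as [B HB];
    try lia; try lra; try assumption.
  - intros i t Hi Ht. apply (proj1 (Hode t Ht)), Hi.
  - intros t Ht. apply (proj2 (Hode t Ht)).
  - apply (maximal_sol_unbounded n k cb rho0 lam0 tB (tB / 2) B lam rho); try lia; try lra; assumption.
Qed.
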